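(* Let $\mathcal{D}_{\text{SEQ}}$ be a temporal sequence database with support threshold $\sigma$ and confidence threshold $\delta$. Let $N_{k-1}=(E_1,\dots,E_{k-1})$ be a frequent $(k-1)$-event combination and $E_k$ a frequent single event, and let $N_k=N_{k-1}\cup E_k$. Then $N_k$ can form frequent $k$-event temporal patterns only if for every $E_i\in N_{k-1}$ there exists $r\in\{\text{Follows},\text{Contains},\text{Overlaps}\}$ such that $r(E_i,E_k)$ is a frequent temporal relation.
   Context: A temporal event is $E=(\omega,T)$ (symbol and set of intervals), with instances $(\omega,[t_s,t_e])$. $\mathcal{D}_{\text{SEQ}}$ is a finite collection of temporal sequences (lists of instances ordered by start time). A $k$-event temporal pattern over events $E_1,\dots,E_k$ is a list of the $\tfrac12k(k-1)$ triples $(r_{ij},E_i,E_j)$, $r_{ij}\in\{\text{Follows},\text{Contains},\text{Overlaps}\}$. A sequence supports a pattern iff it has at least two instances and each triple's relation holds between some instances of the two events in it. Supports count sequences: $\textit{supp}$ of an event (group) is the number of sequences containing an instance of each event, $\textit{supp}(P)$ the number of sequences supporting $P$; $\textit{conf}(P)=\textit{supp}(P)/\max_{E_k\in P}\textit{supp}(E_k)$. An event, event combination, relation (viewed as a 2-event pattern $(r,E_i,E_k)$) or pattern is frequent if its support is at least $\sigma$ (and, for combinations/patterns, its confidence is at least $\delta$). *)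

From mathcomp Require Import all_boot all_order all_algebra.
Set Implicit Arguments. Unset Strict Implicit. Unset Printing Implicit Defensive.
Import Order.TTheory GRing.Theory Num.Theory.

Inductive trel := Follows | Contains | Overlaps.

(* Time points are rationals; an tinterval is a pair (t_s, t_e). *)
Definition tinterval := (rat * rat)%type.

Definition instance (Omega : Type) := (Omega * tinterval)%type.
Definition isym (Omega : Type) (a : instance Omega) : Omega := a.1.
Definition iint (Omega : Type) (a : instance Omega) : tinterval := a.2.

Definition wf_sequence (Omega : Type) (s : seq (instance Omega)) : bool :=
  all (fun a => ((iint a).1 <= (iint a).2)%R) s &&
  sorted (fun a b => ((iint a).1 <= (iint b).1)%R) s.

Definition wf_database (Omega : Type) (D : seq (seq (instance Omega))) : bool :=
  all (@wf_sequence Omega) D.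

Section Mining.
Variable Omega : eqType.
(* [sem r I1 I2] : relation r holds between an instance with tinterval I1
   (first event) and an instance with tinterval I2 (second event). *)
Variable sem : trel -> tinterval -> tinterval -> bool.
Variable D : seq (seq (instance Omega)).

Definition occurs (e : Omega) (s : seq (instance Omega)) : bool :=
  has (fun a => isym a == e) s.

Definition supp_event (e : Omega) : nat := count (occurs e) D.

Definition supp_comb (N : seq Omega) : nat :=
  count (fun s => all (fun e => occurs e s) N) D.

Definition max_supp (N : seq Omega) : nat := \max_(e <- N) supp_event e.

Definition conf_comb (N : seq Omega) : rat := ((supp_comb N)%:R / (max_supp N)%:R)%R.

(* the triples (r_ij, E_i, E_j), i < j, of the k-event pattern over the
   events evs = [E_1; ...; E_k] with relation assignment r *)
Definition triples (evs : seq Omega) (r : nat -> nat -> trel)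
  : seq (trel * Omega * Omega) :=
  let ie := zip (iota 0 (size evs)) evs in
  [seq (r p.1 q.1, p.2, q.2) | p <- ie, q <- [seq q <- ie | p.1 < q.1]].

Definition supports (P : seq (trel * Omega * Omega)) (s : seq (instance Omega)) : bool :=
  (1 < size s) &&
  all (fun t => has (fun a => has (fun b =>
         [&& isym a == t.1.2, isym b == t.2 & sem t.1.1 (iint a) (iint b)]) s) s) P.

Definition supp_pat (P : seq (trel * Omega * Omega)) : nat := count (supports P) D.

Definition conf_pat (evs : seq Omega) (r : nat -> nat -> trel) : rat :=
  ((supp_pat (triples evs r))%:R / (max_supp evs)%:R)%R.

Variables (sigma : nat) (delta : rat).

Definition frequent_event (e : Omega) : Prop := sigma <= supp_event e.

Definition frequent_comb (N : seq Omega) : Prop :=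
  sigma <= supp_comb N /\ (delta <= conf_comb N)%R.

Definition frequent_pattern (evs : seq Omega) (r : nat -> nat -> trel) : Prop :=
  sigma <= supp_pat (triples evs r) /\ (delta <= conf_pat evs r)%R.

Definition frequent_relation (r : trel) (Ei Ek : Omega) : Prop :=
  frequent_pattern [:: Ei; Ek] (fun _ _ => r).
End Mining.

(* A sequence supporting a pattern supports every sub-pattern, so support is
   antitone along sub-patterns, while the maximal event support in the
   denominator of the confidence is monotone along sub-combinations.  Hence
   the 2-event pattern formed by the triple (r_ik, E_i, E_k) of any frequent
   pattern over N_k is at least as supported and as confident as the whole
   pattern. *)
From mathcomp Require Import all_boot all_order all_algebra.
From HB Require Import structures.
Set Implicit Arguments. Unset Strict Implicit. Unset Printing Implicit Defensive.
Import Order.TTheory GRing.Theory Num.Theory.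

Definition trel_eqb (a b : trel) : bool :=
  match a, b with
  | Follows, Follows | Contains, Contains | Overlaps, Overlaps => true
  | _, _ => false
  end.

Lemma trel_eqP : Equality.axiom trel_eqb.
Proof. by case; case; constructor. Qed.

HB.instance Definition _ := hasDecEq.Build trel trel_eqP.

Lemma ler_ratio_nat (R : numFieldType) (a b c d : nat) :
  a <= c -> c <= d -> d <= b -> (a%:R / b%:R <= c%:R / d%:R :> R)%R.
Proof.
move=> le_ac le_cd le_db; have [d0 | d_gt0] := posnP d.
  have c0 : c = 0 by apply/eqP; rewrite -leqn0 -d0.
  have a0 : a = 0 by apply/eqP; rewrite -leqn0 -c0.
  by rewrite a0 c0 !mul0r.
have b_gt0 : 0 < b := leq_trans d_gt0 le_db.
rewrite ler_pdivrMr ?ltr0n // mulrAC ler_pdivlMr ?ltr0n //.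
by rewrite -!natrM ler_nat leq_mul.
Qed.

Section Support.
Variables (Omega : eqType) (sem : trel -> tinterval -> tinterval -> bool).
Variable D : seq (seq (instance Omega)).

Lemma mem_triples (evs : seq Omega) (r : nat -> nat -> trel) (x0 : Omega) i j :
  i < j -> j < size evs ->
  (r i j, nth x0 evs i, nth x0 evs j) \in triples evs r.
Proof.
move=> lt_ij lt_j; set ie := zip (iota 0 (size evs)) evs.
have mem_ie l : l < size evs -> (l, nth x0 evs l) \in ie.
  move=> lt_l; have -> : (l, nth x0 evs l) = nth (0, x0) ie l.
    by rewrite nth_zip ?size_iota // nth_iota.
  by rewrite mem_nth // size_zip size_iota minnn.
apply: (allpairs_f_dep (fun p q => (r p.1 q.1, p.2, q.2))
          (t := fun p => [seq q <- ie | p.1 < q.1]) (y := (j, nth x0 evs j))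
          (mem_ie i (ltn_trans lt_ij lt_j))).
by rewrite mem_filter /= lt_ij mem_ie.
Qed.

Lemma triples_pair (e f : Omega) (r : nat -> nat -> trel) :
  triples [:: e; f] r = [:: (r 0 1, e, f)].
Proof. by []. Qed.

Lemma supports_sub (P Q : seq (trel * Omega * Omega)) s :
  {subset Q <= P} -> supports sem P s -> supports sem Q s.
Proof.
move=> sQP /andP[size_s /allP supP]; rewrite /supports size_s.
by apply/allP => t /sQP /supP.
Qed.

Lemma supp_pat_sub (P Q : seq (trel * Omega * Omega)) :
  {subset Q <= P} -> supp_pat sem D P <= supp_pat sem D Q.
Proof. by move=> sQP; apply/sub_count => s; apply: supports_sub. Qed.

Lemma supports_occurs (P : seq (trel * Omega * Omega)) t s :
  t \in P -> supports sem P s -> occurs t.1.2 s.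
Proof.
move=> tP /andP[_ /allP/(_ t tP)/hasP[a a_s /hasP[b _ /and3P[a_t _ _]]]].
by apply/hasP; exists a.
Qed.

Lemma supp_pat_le_event (P : seq (trel * Omega * Omega)) t :
  t \in P -> supp_pat sem D P <= supp_event D t.1.2.
Proof. by move=> tP; apply/sub_count => s; apply: supports_occurs. Qed.

Lemma leq_max_supp (N : seq Omega) e : e \in N -> supp_event D e <= max_supp D N.
Proof. by move=> eN; rewrite /max_supp (leq_bigmax_seq (F := supp_event D) e). Qed.

Lemma max_supp_sub (M N : seq Omega) :
  {subset M <= N} -> max_supp D M <= max_supp D N.
Proof.
by move=> sMN; rewrite /max_supp; apply/bigmax_leqP_seq => e /sMN /leq_max_supp.
Qed.

End Support.

Theorem lemma5 (Omega : eqType) (sem : trel -> tinterval -> tinterval -> bool)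
  (D : seq (seq (instance Omega))) (sigma : nat) (delta : rat)
  (N : seq Omega) (Ek : Omega) :
  wf_database D ->
  frequent_comb D sigma delta N ->
  frequent_event D sigma Ek ->
  (exists r : nat -> nat -> trel,
      frequent_pattern sem D sigma delta (rcons N Ek) r) ->
  forall Ei, Ei \in N ->
    exists rr : trel, frequent_relation sem D sigma delta rr Ei Ek.
Proof.
move=> _ _ _ [r [supp_P conf_P]] Ei EiN.
set i := index Ei N; have lt_i : i < size N by rewrite index_mem.
exists (r i (size N)).
have tP : (r i (size N), Ei, Ek) \in triples (rcons N Ek) r.
  have := mem_triples r Ek lt_i (_ : size N < size (rcons N Ek)).
  by rewrite size_rcons !nth_rcons lt_i ltnn eqxx nth_index //; apply.
have sub_pat : {subset triples [:: Ei; Ek] (fun _ _ => r i (size N))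
                 <= triples (rcons N Ek) r}.
  by move=> t; rewrite triples_pair inE => /eqP ->.
have sub_evs : {subset [:: Ei; Ek] <= rcons N Ek}.
  by move=> e; rewrite mem_rcons !inE => /orP[] /eqP ->; rewrite ?eqxx ?EiN ?orbT.
split; first exact: leq_trans supp_P (supp_pat_sub sem D sub_pat).
apply: le_trans conf_P _; apply: ler_ratio_nat.
- exact: supp_pat_sub.
- apply: leq_trans (supp_pat_le_event _ _ (mem_head _ _)) _.
  exact/leq_max_supp/mem_head.
- exact: max_supp_sub.
Qed.
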